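(* Fix $\ell\geq2$, let $A=\ell\times\omega$, and fix a recursive bijection $\psi:(\ell-1)\times\omega\times\omega\to\omega$. For $\alpha\in\{0,1\}^\omega$ define the binary relation $S_\alpha$ on $A$ by: $S_\alpha(a,b)$ holds iff $a=(i,n)$, $b=(i+1,m)$ for some $i<\ell-1$, $n,m\in\omega$ with $\alpha_{\psi(i,n,m)}=1$. Let $G$ be the set of $\alpha\in\{0,1\}^\omega$ such that $\langle A,S_\alpha,\{0\}\times\omega,\ldots,\{\ell-1\}\times\omega\rangle$ (interpreting $L_j$ as $\{j\}\times\omega$ and $S$ as $S_\alpha$) is a model of the theory $T_\ell$. Then $G$ is a $\Pi^0_2$ subset of $\{0,1\}^\omega$.
   Context: The signature has unary relations $L_0,\ldots,L_{\ell-1}$ and a binary relation $S$. The theory $T_\ell$ consists of: (i) every $x$ satisfies some $L_j(x)$; (ii) no $x$ satisfies $L_i(x)\wedge L_j(x)$ for $i<j$; (iii) $S(x,y)$ and $L_i(x)$ with $i\le \ell-2$ imply $L_{i+1}(y)$; (iv) extension axioms: for each $i<\ell$ and all finite sets $X,Y\subseteq L_{i+1}$ with $X\cap Y=\emptyset$, $Z\subseteq L_i$, and $X',Y'\subseteq L_{i-1}$ with $X'\cap Y'=\emptyset$ (where $L_{-1}$ and $L_\ell$ are read as the empty set), there is $z\in L_i\setminus Z$ with $S(z,x)$ for all $x\in X$, $S(x',z)$ for all $x'\in X'$, $\neg S(z,y)$ for all $y\in Y$ and $\neg S(y',z)$ for all $y'\in Y'$ (one first-order axiom for each $i$ and each tuple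 of cardinalities $(|X|,|Y|,|Z|,|X'|,|Y'|)$). $\Pi^0_2$ refers to the arithmetical hierarchy on subsets of Cantor space $\{0,1\}^\omega$. *)

From Stdlib Require Import List.
From mathcomp Require Import all_boot.

Set Implicit Arguments.
Unset Strict Implicit.
Unset Printing Implicit Defensive.

Inductive rcode : Type :=
| RZero : rcode
| RSucc : rcode
| RProj : nat -> rcode
| RComp : rcode -> list rcode -> rcode
| RPrec : rcode -> rcode -> rcode
| RMin  : rcode -> rcode.

Inductive eval : rcode -> list nat -> nat -> Prop :=
| ev_zero xs : eval RZero xs 0
| ev_succ x xs : eval RSucc (x :: xs) (S x)
| ev_proj i xs : eval (RProj i) xs (List.nth i xs 0)
| ev_comp f gs xs ys y :
    Forall2 (fun g v => eval g xs v) gs ys ->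
    eval f ys y -> eval (RComp f gs) xs y
| ev_prec0 f g xs y : eval f xs y -> eval (RPrec f g) (0 :: xs) y
| ev_precS f g n xs z y :
    eval (RPrec f g) (n :: xs) z -> eval g (n :: z :: xs) y ->
    eval (RPrec f g) (S n :: xs) y
| ev_min f xs n :
    eval f (n :: xs) 0 ->
    (forall m, m < n -> exists k, eval f (m :: xs) (S k)) ->
    eval (RMin f) xs n.

(* Cantor space {0,1}^ω = nat -> bool (true = 1), and lightface Π^0_2. *)

(* Code of the finite binary string alpha|m = (alpha 0,...,alpha (m-1)):
   binary expansion with a leading 1 (a recursive bijection between
   finite binary strings and positive naturals). *)
Definition prefix_code (alpha : nat -> bool) (m : nat) : nat :=
  2 ^ m + \sum_(i < m) (alpha i) * 2 ^ i.

(* G is Π^0_2: there is a total recursive R with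
   alpha ∈ G  <->  forall k, exists m, R(k, alpha|m) = 0. *)
Definition Pi02 (G : (nat -> bool) -> Prop) : Prop :=
  exists e : rcode,
    (forall k c, exists y, eval e [:: k; c] y) /\
    (forall alpha, G alpha <-> forall k, exists m, eval e [:: k; prefix_code alpha m] 0).

(* L j is the interpretation of L_j (only j < l is used); finite sets *)
(* are given by lists.                                                 *)

Definition subset_of {M : Type} (X : list M) (P : M -> Prop) : Prop :=
  forall x, List.In x X -> P x.

Definition disjoint_lists {M : Type} (X Y : list M) : Prop :=
  forall x, List.In x X -> ~ List.In x Y.

Definition model_T (l : nat) (M : Type) (L : nat -> M -> Prop)
    (S : M -> M -> Prop) : Prop :=
  (* L_j with the conventions L_{-1} = L_l = ∅ *)
  let Lup := fun (i : nat) (x : M) => i.+1 < l /\ L i.+1 x in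
  let Ldown := fun (i : nat) (x : M) => 0 < i /\ L i.-1 x in
  (forall x, exists j, j < l /\ L j x) /\
  (forall x i j, i < j -> j < l -> ~ (L i x /\ L j x)) /\
  (forall x y i, i <= l - 2 -> S x y -> L i x -> L i.+1 y) /\
  (forall i, i < l ->
     forall X Y Z X' Y' : list M,
       subset_of X (Lup i) -> subset_of Y (Lup i) -> disjoint_lists X Y ->
       subset_of Z (L i) ->
       subset_of X' (Ldown i) -> subset_of Y' (Ldown i) -> disjoint_lists X' Y' ->
       exists z, L i z /\ ~ List.In z Z /\
         (forall x, List.In x X -> S z x) /\
         (forall x', List.In x' X' -> S x' z) /\
         (forall y, List.In y Y -> ~ S z y) /\
         (forall y', List.In y' Y' -> ~ S y' z)).

Definition A (l : nat) : Type := ('I_l * nat)%type.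

Definition LA (l : nat) (j : nat) (a : A l) : Prop := nat_of_ord a.1 = j.

Definition S_alpha (l : nat) (psi : nat -> nat -> nat -> nat)
    (alpha : nat -> bool) (a b : A l) : Prop :=
  nat_of_ord a.1 < l - 1 /\ nat_of_ord b.1 = (nat_of_ord a.1).+1 /\
  alpha (psi (nat_of_ord a.1) a.2 b.2) = true.

Definition recursive_bijection (l : nat) (psi : nat -> nat -> nat -> nat) : Prop :=
  (exists e : rcode, forall i n m, i < l - 1 -> eval e [:: i; n; m] (psi i n m)) /\
  (forall i n m i' n' m', i < l - 1 -> i' < l - 1 ->
      psi i n m = psi i' n' m' -> i = i' /\ n = n' /\ m = m') /\
  (forall k, exists i n m, i < l - 1 /\ psi i n m = k).

From Stdlib Require Import List.
From mathcomp Require Import all_boot zify.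

Set Implicit Arguments.
Unset Strict Implicit.
Unset Printing Implicit Defensive.

(* Every axiom of T_l other than the extension axioms holds in every structure
   <A, S_alpha, ...>, and an instance of an extension axiom at level i asks
   for a point of level i, outside a finite set, whose edges to finitely many
   points of levels i+1 and i-1 are prescribed.  Such an instance is coded by
   i and a number s whose bits give the prescribed edges, and a candidate n
   answers it by finitely many bits of alpha, all located through psi.  So
   alpha is in G iff for every code k there is a prefix of alpha on which a
   witness below its length can be verified; that verification is computable
   from a code for psi, whence G is Pi^0_2. *)

Lemma eval_det : forall e xs y, eval e xs y -> forall y', eval e xs y' -> y = y'.
Proof.
fix IH 4 => e xs y H y' H'.
destruct H as [?|? ?|? ?|f gs xs ys y Hgs Hf|f g xs y Hf|f g n xs z y Hrec Hg|f xs n Hn Hlt].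
- by inversion H'.
- by inversion H'.
- by inversion H'.
- inversion H' as [| | |? ? ? ys' ? Hgs' Hf'| | |]; subst.
  suff Eys : ys = ys' by subst; exact: IH Hf _ Hf'.
  clear H' Hf Hf'; revert ys' Hgs'.
  induction Hgs as [|g v gs' vs Hv _ IHgs] => ys' Hgs';
    inversion Hgs' as [|? ? ? ? Hv' Hvs']; subst => //.
  by rewrite (IH _ _ _ Hv _ Hv') (IHgs _ Hvs').
- by inversion H'; subst; apply: IH Hf _ _.
- inversion H' as [| | | | |? ? ? ? z' ? Hrec' Hg'|]; subst.
  by rewrite (IH _ _ _ Hrec _ Hrec') in Hg; apply: IH Hg _ Hg'.
- inversion H' as [| | | | | |? ? ? Hy Hlt']; subst.
  case: (ltngtP n y') => // [lt_ny | lt_yn].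
  + destruct (Hlt' _ lt_ny) as [k Hk]; by have := IH _ _ _ Hn _ Hk.
  (* [destruct], not [have]: the guard checker must see that [Hk] is a
     subderivation of [Hlt]. *)
  + destruct (Hlt _ lt_yn) as [k Hk]; by have := IH _ _ _ Hk _ Hy.
Qed.

(** * Computable functions of finitely many arguments *)

Definition env := nat -> nat.

Definition envof (xs : list nat) : env := fun i => List.nth i xs 0.

Definition scons (x : nat) (E : env) : env := fun i => if i is j.+1 then E j else x.

(* Locality in the first [N] arguments lets an argument list of any length be
   cut down to a fixed one, as primitive recursion requires. *)
Definition computable (N : nat) (f : env -> nat) : Prop :=
  (exists e, forall xs, eval e xs (f (envof xs))) /\
  (forall E E', (forall i, i < N -> E i = E' i) -> f E = f E').

Definition computableb (N : nat) (p : env -> bool) : Prop :=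
  computable N (fun E => nat_of_bool (p E)).

Lemma eval_projs xs (s : nat -> nat) (r : seq nat) :
  Forall2 (fun g v => eval g xs v) [seq RProj (s i) | i <- r] [seq envof xs (s i) | i <- r].
Proof. by elim: r => [|i r IH] /=; constructor; [exact: ev_proj | exact: IH]. Qed.

Lemma envof_map_iota (f : nat -> nat) N i :
  i < N -> envof [seq f j | j <- iota 0 N] i = f i.
Proof.
rewrite -[f i]/(f (0 + i)); elim: N 0 i => [|N IH] m [|i] //= Hi.
  by rewrite addn0.
by rewrite /envof /= -/(envof _ i) IH // addSnnS.
Qed.

Lemma computable_ext N f g : computable N f -> f =1 g -> computable N g.
Proof.
move=> [[e He] Hloc] Efg; split; first by exists e => xs; rewrite -Efg.
by move=> E E' HE; rewrite -!Efg; exact: Hloc.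
Qed.

Lemma computable_reindex N M (s : nat -> nat) f :
  computable N f -> (forall i, i < N -> s i < M) ->
  computable M (fun E => f (fun i => E (s i))).
Proof.
move=> [[e He] Hloc] Hs; split.
- exists (RComp e [seq RProj (s i) | i <- iota 0 N]) => xs.
  apply: ev_comp (eval_projs xs s _) _.
  rewrite (Hloc _ (envof [seq envof xs (s i) | i <- iota 0 N])); first exact: He.
  by move=> i Hi; rewrite envof_map_iota.
- by move=> E E' HE; apply: Hloc => i Hi; apply: HE; exact: Hs.
Qed.

Lemma computable_proj N i : i < N -> computable N (fun E => E i).
Proof. by move=> Hi; split=> [|E E' ->//]; exists (RProj i) => xs; exact: ev_proj. Qed.

Fixpoint const_code (n : nat) : rcode :=
  if n is m.+1 then RComp RSucc [:: const_code m] else RZero.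

Lemma eval_const_code n xs : eval (const_code n) xs n.
Proof.
elim: n => [|n IH] /=; first exact: ev_zero.
by apply: (@ev_comp _ _ _ [:: n]); [constructor | exact: ev_succ].
Qed.

Lemma computable_const N n : computable N (fun=> n).
Proof. by split=> //; exists (const_code n) => xs; exact: eval_const_code. Qed.

Lemma computable_succ N f : computable N f -> computable N (fun E => (f E).+1).
Proof.
move=> [[e He] Hloc]; split=> [|E E' /Hloc -> //].
exists (RComp RSucc [:: e]) => xs.
by apply: (@ev_comp _ _ _ [:: f (envof xs)]); [constructor | exact: ev_succ].
Qed.

Lemma computable_comp3 N e (g : nat -> nat -> nat -> nat) a b c :
  (forall x y z, eval e [:: x; y; z] (g x y z)) ->
  computable N a -> computable N b -> computable N c ->
  computable N (fun E => g (a E) (b E) (c E)).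
Proof.
move=> Hg [[ea Ha] Hla] [[eb Hb] Hlb] [[ec Hc] Hlc].
split=> [|E E' HE]; last by rewrite (Hla _ _ HE) (Hlb _ _ HE) (Hlc _ _ HE).
exists (RComp e [:: ea; eb; ec]) => xs.
apply: (@ev_comp _ _ _ [:: a (envof xs); b (envof xs); c (envof xs)]); last exact: Hg.
by repeat constructor.
Qed.

(* Primitive recursion: [s] sees the counter as argument 0, the previous value
   as argument 1 and the parameters from argument 2 on. *)
Lemma computable_iteri N n b s :
  computable N n -> computable N b -> computable N.+2 s ->
  computable N (fun E => iteri (n E) (fun k z => s (scons k (scons z E))) (b E)).
Proof.
move=> [[en Hn] Hln] [[eb Hb] Hlb] [[es Hs] Hls]; split.
- exists (RComp (RPrec eb es) (en :: [seq RProj i | i <- iota 0 N])) => xs.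
  set ys := [seq envof xs i | i <- iota 0 N].
  have Hys i : i < N -> envof ys i = envof xs i by move=> Hi; rewrite envof_map_iota.
  apply: (@ev_comp _ _ _ (n (envof xs) :: ys)).
    by constructor; [exact: Hn | exact: (eval_projs xs id)].
  elim: (n (envof xs)) => [|v IH] /=.
    by apply: ev_prec0; rewrite -(Hlb _ _ Hys); exact: Hb.
  apply: ev_precS IH _; set z := iteri v _ _.
  rewrite (Hls _ (envof [:: v, z & ys])); first exact: Hs.
  by move=> [|[|i]] // Hi; exact/esym/Hys.
- move=> E E' HE; rewrite (Hln _ _ HE) (Hlb _ _ HE).
  by apply: eq_iteri => k z; apply: Hls => -[|[|i]] //= Hi; exact: HE.
Qed.

Lemma computable_shift2 N f : computable N f -> computable N.+2 (fun E => f (fun i => E i.+2)).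
Proof. by move=> Hf; apply: computable_reindex Hf _ => i; rewrite ltnS. Qed.

Lemma computable_add N a b :
  computable N a -> computable N b -> computable N (fun E => a E + b E).
Proof.
move=> Ha Hb; have Hs : computable N.+2 (fun E => (E 1).+1).
  exact/computable_succ/computable_proj.
apply: computable_ext (computable_iteri Hb Ha Hs) _ => E /=.
by elim: (b E) => [|v IH] /=; rewrite ?addn0 ?IH ?addnS.
Qed.

Lemma computable_mul N a b :
  computable N a -> computable N b -> computable N (fun E => a E * b E).
Proof.
move=> Ha Hb; have Hs : computable N.+2 (fun E => E 1 + a (fun i => E i.+2)).
  exact: computable_add (computable_proj _) (computable_shift2 Ha).
apply: computable_ext (computable_iteri Hb (computable_const N 0) Hs) _ => E /=.
by elim: (b E) => [|v IH] /=; rewrite ?muln0 // IH mulnS addnC.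
Qed.

Lemma computable_pred N a : computable N a -> computable N (fun E => (a E).-1).
Proof.
move=> Ha; have Hs : computable N.+2 (fun E => E 0) by exact: computable_proj.
by apply: computable_ext (computable_iteri Ha (computable_const N 0) Hs) _ => E /=; case: (a E).
Qed.

Lemma computable_sub N a b :
  computable N a -> computable N b -> computable N (fun E => a E - b E).
Proof.
move=> Ha Hb; have Hs : computable N.+2 (fun E => (E 1).-1).
  exact/computable_pred/computable_proj.
apply: computable_ext (computable_iteri Hb Ha Hs) _ => E /=.
by elim: (b E) => [|v IH] /=; rewrite ?subn0 // IH subnS.
Qed.

Lemma computable_minn N a b :
  computable N a -> computable N b -> computable N (fun E => minn (a E) (b E)).
Proof.
move=> Ha Hb; apply: computable_ext (computable_sub Ha (computable_sub Ha Hb)) _ => E.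
by rewrite minnE.
Qed.

Lemma computableb_leq N a b :
  computable N a -> computable N b -> computableb N (fun E => a E <= b E).
Proof.
move=> Ha Hb; have Hs : computable N.+2 (fun=> 0) by exact: computable_const.
apply: computable_ext (computable_iteri (computable_sub Ha Hb) (computable_const N 1) Hs) _.
by move=> E /=; rewrite -subn_eq0; case: (a E - b E).
Qed.

Lemma computableb_neg N p : computableb N p -> computableb N (fun E => ~~ p E).
Proof.
move=> Hp; apply: computable_ext (computable_sub (computable_const N 1) Hp) _ => E.
by case: (p E).
Qed.

Lemma computableb_and N p q :
  computableb N p -> computableb N q -> computableb N (fun E => p E && q E).
Proof.
move=> Hp Hq; apply: computable_ext (computable_mul Hp Hq) _ => E.
by case: (p E); case: (q E).
Qed.

Lemma computableb_implb N p q :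
  computableb N p -> computableb N q -> computableb N (fun E => p E ==> q E).
Proof.
move=> Hp Hq; apply: computable_ext (computableb_neg (computableb_and Hp (computableb_neg Hq))) _.
by move=> E; case: (p E); case: (q E).
Qed.

Lemma computableb_eqn N a b :
  computable N a -> computable N b -> computableb N (fun E => a E == b E).
Proof.
move=> Ha Hb.
apply: computable_ext (computableb_and (computableb_leq Ha Hb) (computableb_leq Hb Ha)) _.
by move=> E; rewrite eqn_leq.
Qed.

Lemma computableb_eqb N p q :
  computableb N p -> computableb N q -> computableb N (fun E => p E == q E).
Proof.
move=> Hp Hq; apply: computable_ext (computableb_eqn Hp Hq) _ => E.
by case: (p E); case: (q E).
Qed.

Lemma computableb_odd N a : computable N a -> computableb N (fun E => odd (a E)).
Proof.
move=> Ha; have Hs : computable N.+2 (fun E => 1 - E 1).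
  exact: computable_sub (computable_const _ 1) (computable_proj _).
apply: computable_ext (computable_iteri Ha (computable_const N 0) Hs) _ => E /=.
by elim: (a E) => [|v IH] //=; rewrite IH; case: (odd v).
Qed.

Lemma computable_exp2 N a : computable N a -> computable N (fun E => 2 ^ a E).
Proof.
move=> Ha; have Hs : computable N.+2 (fun E => E 1 + E 1).
  exact: computable_add (computable_proj _) (computable_proj _).
apply: computable_ext (computable_iteri Ha (computable_const N 1) Hs) _ => E /=.
by elim: (a E) => [|v IH] //=; rewrite IH expnS mul2n addnn.
Qed.

(* The quotient counts the [k < a] with [(k + 1) * b <= a]. *)
Lemma computable_div N a b : computable N a -> computable N b -> (forall E, 0 < b E) ->
  computable N (fun E => a E %/ b E).
Proof.
move=> Ha Hb b_gt0.
have Hs : computable N.+2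
    (fun E => E 1 + ((E 0).+1 * b (fun i => E i.+2) <= a (fun i => E i.+2))).
  apply: computable_add (computable_proj _) (computableb_leq _ (computable_shift2 Ha)) => //.
  exact: computable_mul (computable_succ (computable_proj _)) (computable_shift2 Hb).
apply: computable_ext (computable_iteri Ha (computable_const N 0) Hs) _ => E /=.
suff -> : forall v, iteri v (fun k z => z + (k.+1 * b E <= a E)) 0 = minn v (a E %/ b E).
  by apply/minn_idPr; rewrite leq_div.
elim=> [|v IH] /=; first by rewrite min0n.
by rewrite IH -leq_divRL //; case: leqP => H; lia.
Qed.

Lemma computable_mod N a b : computable N a -> computable N b -> (forall E, 0 < b E) ->
  computable N (fun E => a E %% b E).
Proof.
move=> Ha Hb b_gt0.
apply: computable_ext (computable_sub Ha (computable_mul (computable_div Ha Hb b_gt0) Hb)) _.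
by move=> E; rewrite {1}(divn_eq (a E) (b E)) addKn.
Qed.

Lemma computable_count N p B : computableb N.+1 p -> computable N B ->
  computable N (fun E => count (fun x => p (scons x E)) (iota 0 (B E))).
Proof.
move=> Hp HB; pose s i := if i is j.+1 then j.+2 else 0.
have Hs : computable N.+2 (fun E => E 1 + p (fun i => E (s i))).
  by apply: computable_add (computable_proj _) (computable_reindex Hp _) => // -[|i].
apply: computable_ext (computable_iteri HB (computable_const N 0) Hs) _ => E /=.
elim: (B E) => [|v IH] //; rewrite iteriS IH -[in RHS]addn1 iotaD count_cat /= addn0.
by congr (_ + _); apply: Hp.2 => -[|i].
Qed.

Lemma computableb_has N p B : computableb N.+1 p -> computable N B ->
  computableb N (fun E => has (fun x => p (scons x E)) (iota 0 (B E))).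
Proof.
move=> Hp HB.
apply: computable_ext (computableb_leq (computable_const N 1) (computable_count Hp HB)) _.
by move=> E; rewrite has_count.
Qed.

Lemma computableb_all N p B : computableb N.+1 p -> computable N B ->
  computableb N (fun E => all (fun x => p (scons x E)) (iota 0 (B E))).
Proof.
move=> Hp HB; apply: computable_ext (computableb_neg (computableb_has (computableb_neg Hp) HB)) _.
by move=> E; rewrite -all_predC; congr nat_of_bool; apply: eq_all => x; rewrite /= negbK.
Qed.

(** * Prefix codes *)

Lemma prefix_codeS f N : prefix_code f N.+1 = prefix_code f N + (1 + f N) * 2 ^ N.
Proof. by rewrite /prefix_code big_ord_recr /= expnS mulnDl mul1n; lia. Qed.

Lemma prefix_code_bounds f N : 2 ^ N <= prefix_code f N < 2 ^ N.+1.
Proof.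
elim: N => [|N IH]; first by rewrite /prefix_code big_ord0.
by rewrite prefix_codeS !expnS; move: IH; rewrite expnS; case: (f N) => /=; lia.
Qed.

Definition bitn (c p : nat) : bool := odd (c %/ 2 ^ p).

Definition known (c p : nat) : bool := 2 ^ p.+1 <= c.

Lemma bitn_prefix_code f N p : p < N -> bitn (prefix_code f N) p = f p.
Proof.
rewrite /bitn; elim: N => [|N IH] //; rewrite ltnS leq_eqVlt => /orP [/eqP -> | lt_pN].
- have [lo hi] := andP (prefix_code_bounds f N).
  rewrite prefix_codeS addnC divnMDl ?expn_gt0 //.
  have -> : prefix_code f N %/ 2 ^ N = 1.
    by apply/eqP; rewrite eqn_leq -ltnS ltn_divLR ?leq_divRL ?expn_gt0 // mul1n -expnS hi lo.
  by rewrite addn1 /=; case: (f N).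
- rewrite prefix_codeS (_ : 2 ^ N = 2 ^ (N - p) * 2 ^ p); last by rewrite -expnD subnK // ltnW.
  rewrite mulnA addnC divnMDl ?expn_gt0 // oddD IH // oddM oddX subn_eq0.
  by rewrite leqNgt lt_pN andbF.
Qed.

Lemma known_prefix_code f N p : known (prefix_code f N) p = (p < N).
Proof.
have [lo hi] := andP (prefix_code_bounds f N); rewrite /known.
case: (ltnP p N) => H.
- by apply: leq_trans lo; rewrite leq_exp2l.
- by apply/negbTE; rewrite -ltnNge (leq_trans hi) // leq_exp2l.
Qed.

(** * The extension property *)

(* A number [s] codes a one-point extension problem at level [i] over the first
   [s] points of the two neighbouring levels: bit [2x] of [s] says whether the
   new point has an edge to the point [x] above, bit [2x+1] whether the point
   [x] below has an edge to it.  Asking for a solution [n >= s] takes care of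
   the finitely many points the new one must avoid. *)
Definition up_bit (s x : nat) : bool := bitn s (2 * x).

Definition down_bit (s x : nat) : bool := bitn s (2 * x).+1.

Definition extension_property (l : nat) (psi : nat -> nat -> nat -> nat)
    (alpha : nat -> bool) : Prop :=
  forall i s, i < l -> exists2 n, s <= n & forall x, x < s ->
    (i.+1 < l -> alpha (psi i n x) = up_bit s x) /\
    (0 < i -> alpha (psi i.-1 x n) = down_bit s x).

Lemma S_alphaE l psi alpha (a b : A l) :
  b.1 = a.1.+1 :> nat -> S_alpha psi alpha a b <-> alpha (psi a.1 a.2 b.2).
Proof.
move=> Eb; rewrite /S_alpha Eb; split=> [[_ [_ ->]] // | Hab]; do !split=> //.
by have := ltn_ord b.1; rewrite Eb; lia.
Qed.

Definition row (l j : nat) (p : pred nat) (s : nat) : list (A l) :=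
  if insub j is Some o then List.map (pair o) (List.filter p (List.seq 0 s)) else nil.

Lemma row_sub l j (p : pred nat) s : subset_of (row l j p s) (fun a => j < l /\ LA j a).
Proof.
rewrite /row; case: insubP => // o Hj Eo a /List.in_map_iff [x [<- _]].
by rewrite /LA /= Eo.
Qed.

Lemma mem_row l (o : 'I_l) (p : pred nat) s x : x < s -> p x -> List.In (o, x) (row l o p s).
Proof.
move=> lt_xs px; rewrite /row valK; apply/List.in_map_iff; exists x; split=> //.
by apply/List.filter_In; split=> //; apply/List.in_seq; lia.
Qed.

Lemma row_disjoint l j (p : pred nat) s :
  disjoint_lists (row l j p s) (row l j (fun x => ~~ p x) s).
Proof.
rewrite /row /disjoint_lists; case: insub => // o a.
move=> /List.in_map_iff [x [<- /List.filter_In [_ px]]].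
by move=> /List.in_map_iff [y [[->] /List.filter_In [_]]]; rewrite px.
Qed.

Lemma model_extension l psi alpha :
  model_T l (LA (l:=l)) (S_alpha psi alpha) -> extension_property l psi alpha.
Proof.
move=> [_ [_ [_ Hext]]] i s Hi.
pose below p := if 0 < i then row l i.-1 p s else nil.
have below_sub p : subset_of (below p) (fun a => 0 < i /\ LA i.-1 a).
  by rewrite /below; case: ifP => // i_gt0 a /row_sub [].
have below_disjoint p : disjoint_lists (below p) (below (fun x => ~~ p x)).
  by rewrite /below; case: ifP => _ a //; exact: (@row_disjoint l).
pose above p := row l i.+1 p s.
have [z [Lz [z_notin [HX [HX' [HY HY']]]]]] :=
  Hext i Hi (above (up_bit s)) (above (fun x => ~~ up_bit s x)) (row l i xpredT s)
    (below (down_bit s)) (below (fun x => ~~ down_bit s x)) (@row_sub l _ _ s)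
    (@row_sub l _ _ s) (@row_disjoint l _ _ s) (fun a Ha => (row_sub Ha).2)
    (below_sub _) (below_sub _) (below_disjoint _).
rewrite /LA in Lz; exists z.2.
  rewrite leqNgt; apply/negP => lt_zs; apply: z_notin.
  by rewrite [z]surjective_pairing -Lz; exact: mem_row.
move=> x lt_xs; split=> [Hup | i_gt0].
- pose a : A l := (Ordinal Hup, x).
  have Sa : S_alpha psi alpha z a <-> alpha (psi i z.2 x).
    by rewrite -Lz; apply: S_alphaE; rewrite /= Lz.
  case Hb: (up_bit s x).
  + by apply/Sa/HX/mem_row; rewrite ?Hb.
  + by apply/negbTE/negP => /Sa; apply/HY/mem_row; rewrite ?Hb.
- have Hdown : i.-1 < l by rewrite (leq_ltn_trans (leq_pred i)).
  pose a : A l := (Ordinal Hdown, x).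
  have Sa : S_alpha psi alpha a z <-> alpha (psi i.-1 x z.2).
    by apply: S_alphaE; rewrite /= Lz prednK.
  rewrite /below i_gt0 in HX' HY'.
  case Hb: (down_bit s x).
  + by apply/Sa/HX'/mem_row; rewrite ?Hb.
  + by apply/negbTE/negP => /Sa; apply/HY'/mem_row; rewrite ?Hb.
Qed.

Definition pattern_code (up down : pred nat) (K : nat) : nat :=
  prefix_code (fun j => if odd j then down j./2 else up j./2) (2 * K).

Lemma pattern_code_ge up down K : K <= pattern_code up down K.
Proof.
have [lo _] := andP (prefix_code_bounds (fun j => if odd j then down j./2 else up j./2) (2 * K)).
by apply: leq_trans lo; apply: ltnW; apply: leq_ltn_trans (ltn_expl _ (isT : 1 < 2)); lia.
Qed.

Lemma up_bit_pattern_code up down K x : x < K -> up_bit (pattern_code up down K) x = up x.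
Proof.
by move=> lt_xK; rewrite /up_bit bitn_prefix_code ?ltn_pmul2l // mul2n odd_double doubleK.
Qed.

Lemma down_bit_pattern_code up down K x :
  x < K -> down_bit (pattern_code up down K) x = down x.
Proof.
move=> lt_xK; rewrite /down_bit bitn_prefix_code; last lia.
by rewrite /= mul2n odd_double /= uphalf_double.
Qed.

Definition snd_bound (T : Type) (X : list (T * nat)) : nat :=
  foldr (fun a m => maxn a.2.+1 m) 0 X.

Lemma snd_bound_gt (T : Type) (X : list (T * nat)) a : List.In a X -> a.2 < snd_bound X.
Proof.
elim: X => [|b X IH] // [<- | /IH lt_aX] /=; first by rewrite leq_max leqnn.
by rewrite leq_max lt_aX orbT.
Qed.

Definition has_snd (T : Type) (X : list (T * nat)) (x : nat) : bool :=
  List.existsb (fun a => a.2 == x) X.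

Lemma has_snd_In (T : Type) (X : list (T * nat)) a : List.In a X -> has_snd X a.2.
Proof. by move=> Ha; apply/List.existsb_exists; exists a; rewrite eqxx. Qed.

Lemma In_has_snd l j (X : list (A l)) (a : A l) :
  subset_of X (LA j) -> LA j a -> has_snd X a.2 -> List.In a X.
Proof.
move=> HX Ha /List.existsb_exists [b [Hb /eqP Eb2]].
have Eb1 : b.1 = a.1 by apply: val_inj; rewrite /= (HX b Hb) Ha.
by rewrite [a]surjective_pairing -Eb1 -Eb2 -surjective_pairing.
Qed.

Lemma extension_model l psi alpha :
  extension_property l psi alpha -> model_T l (LA (l:=l)) (S_alpha psi alpha).
Proof.
move=> Hext; split; [|split; [|split]].
- by move=> a; exists a.1.
- by move=> a i j lt_ij _ [Ei Ej]; move: lt_ij; rewrite -Ei -Ej ltnn.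
- by move=> a b i _ [_ [Eb _]]; rewrite /LA Eb => ->.
move=> i Hi X Y Z X' Y' HX HY HXY _ HX' HY' HXY'.
set pts := X ++ Y ++ Z ++ X' ++ Y'.
have [inX inY inZ inX' inY'] : [/\ forall a, List.In a X -> List.In a pts,
    forall a, List.In a Y -> List.In a pts, forall a, List.In a Z -> List.In a pts,
    forall a, List.In a X' -> List.In a pts & forall a, List.In a Y' -> List.In a pts].
  by split=> a; rewrite /pts !List.in_app_iff; tauto.
set K := snd_bound pts; set s := pattern_code (has_snd X) (has_snd X') K.
have [n le_sn Hn] := Hext i s Hi.
have lt_Kn a : List.In a pts -> a.2 < n.
  move=> /snd_bound_gt lt_aK; apply: leq_trans le_sn.
  exact: leq_trans lt_aK (pattern_code_ge _ _ _).
have up a : i.+1 < l -> List.In a pts -> alpha (psi i n a.2) = has_snd X a.2.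
  move=> lt_il /snd_bound_gt lt_aK.
  by rewrite (Hn _ (leq_trans lt_aK (pattern_code_ge _ _ _))).1 // up_bit_pattern_code.
have down a : 0 < i -> List.In a pts -> alpha (psi i.-1 a.2 n) = has_snd X' a.2.
  move=> i_gt0 /snd_bound_gt lt_aK.
  by rewrite (Hn _ (leq_trans lt_aK (pattern_code_ge _ _ _))).2 // down_bit_pattern_code.
exists (Ordinal Hi, n); split=> //; split; [|split; [|split; [|split]]].
- by move=> /inZ /lt_Kn; rewrite ltnn.
- move=> a Ha; have [lt_il Ea] := HX a Ha.
  apply/(S_alphaE psi alpha (a := (Ordinal Hi, n)) Ea).
  by rewrite up ?(has_snd_In Ha) //; exact: inX.
- move=> a Ha; have [i_gt0 Ea] := HX' a Ha.
  have Ei : i = a.1.+1 :> nat by rewrite Ea prednK.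
  apply/(S_alphaE psi alpha (b := (Ordinal Hi, n)) Ei).
  by rewrite Ea down ?(has_snd_In Ha) //; exact: inX'.
- move=> a Ha; have [lt_il Ea] := HY a Ha.
  move/(S_alphaE (a := (Ordinal Hi, n)) psi alpha Ea); rewrite /= up //; last exact: inY.
  by move/(In_has_snd (fun b Hb => (HX b Hb).2) Ea)/HXY; apply.
- move=> a Ha; have [i_gt0 Ea] := HY' a Ha.
  have Ei : i = a.1.+1 :> nat by rewrite Ea prednK.
  move/(S_alphaE (b := (Ordinal Hi, n)) psi alpha Ei); rewrite /= Ea down //; last exact: inY'.
  by move/(In_has_snd (fun b Hb => (HX' b Hb).2) Ea)/HXY'; apply.
Qed.

(** * A recursive matrix for the extension property *)

(* [psi] is only known to be computable for [i < l - 1]; clamping the first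
   argument makes it total without changing it there. *)
Definition psi_clamped (l : nat) (psi : nat -> nat -> nat -> nat) (i n m : nat) : nat :=
  psi (minn i (l - 2)) n m.

Definition bit_matches (c p : nat) (b : bool) : bool := known c p && (bitn c p == b).

Definition point_ok l psi (c i s n x : nat) : bool :=
  ((i.+1 < l) ==> bit_matches c (psi_clamped l psi i n x) (up_bit s x)) &&
  ((0 < i) ==> bit_matches c (psi_clamped l psi i.-1 x n) (down_bit s x)).

Definition witness_ok l psi (c i s n : nat) : bool :=
  (s <= n) && all (point_ok l psi c i s n) (iota 0 s).

(* [k] codes the instance [(k %% l, k %/ l)] of the extension property and [c]
   is meant to be [prefix_code alpha m]; a witness is searched below [c > m]. *)
Definition check l psi (k c : nat) : bool :=
  has (witness_ok l psi c (k %% l) (k %/ l)) (iota 0 c).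

Lemma bit_matches_prefix_code f m p b :
  bit_matches (prefix_code f m) p b = (p < m) && (f p == b).
Proof. by rewrite /bit_matches known_prefix_code; case: ltnP => // /bitn_prefix_code ->. Qed.

Lemma point_ok_prefix_code l psi alpha m i s n x : i < l ->
  point_ok l psi (prefix_code alpha m) i s n x =
    ((i.+1 < l) ==> (psi i n x < m) && (alpha (psi i n x) == up_bit s x)) &&
    ((0 < i) ==> (psi i.-1 x n < m) && (alpha (psi i.-1 x n) == down_bit s x)).
Proof.
move=> Hi; rewrite /point_ok !bit_matches_prefix_code /psi_clamped.
by case: ltnP => [lt_il | _]; case: posnP => [-> | i_gt0] /=; rewrite ?(minn_idPl _) //; lia.
Qed.

Lemma extension_check l psi alpha : 0 < l ->
  extension_property l psi alpha -> forall k, exists m, check l psi k (prefix_code alpha m).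
Proof.
move=> l_gt0 Hext k; have Hi : k %% l < l by rewrite ltn_pmod.
have [n le_sn Hn] := Hext _ (k %/ l) Hi.
set i := k %% l in Hi Hn *; set s := k %/ l in le_sn Hn *.
set M := \max_(y < s) (psi i n y + psi i.-1 y n).
exists (n.+1 + M); apply/hasP; exists n.
  have [lo _] := andP (prefix_code_bounds alpha (n.+1 + M)).
  have := ltn_expl (n.+1 + M) (isT : 1 < 2); rewrite mem_iota /=; lia.
rewrite /witness_ok le_sn; apply/allP => x; rewrite mem_iota leq0n add0n => lt_xs.
have le_M : psi i n x + psi i.-1 x n <= M.
  exact: (leq_bigmax (F := fun y : 'I_s => psi i n y + psi i.-1 y n) (Ordinal lt_xs)).
have [Hup Hdown] := Hn x lt_xs; rewrite point_ok_prefix_code // -/i -/s.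
by apply/andP; split; apply/implyP => H; rewrite ?Hup ?Hdown // eqxx andbT; lia.
Qed.

Lemma check_extension l psi alpha : 0 < l ->
  (forall k, exists m, check l psi k (prefix_code alpha m)) -> extension_property l psi alpha.
Proof.
move=> l_gt0 Hcheck i s Hi.
have Ei : (s * l + i) %% l = i by rewrite modnMDl modn_small.
have Es : (s * l + i) %/ l = s by rewrite divnMDl // divn_small // addn0.
have [m] := Hcheck (s * l + i); rewrite /check Ei Es => /hasP [n _ /andP [le_sn /allP Hall]].
exists n => // x lt_xs.
have := Hall x; rewrite mem_iota lt_xs point_ok_prefix_code // => /(_ isT).
by case/andP => /implyP Hup /implyP Hdown; split=> [/Hup | /Hdown] /andP [_ /eqP].
Qed.

Lemma eval_psi_clamped l psi e : 1 < l ->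
  (forall i n m, i < l - 1 -> eval e [:: i; n; m] (psi i n m)) ->
  exists e', forall i n m, eval e' [:: i; n; m] (psi_clamped l psi i n m).
Proof.
move=> Hl He.
have [[emin Hmin] _] :=
  computable_minn (computable_proj (isT : 0 < 1)) (computable_const 1 (l - 2)).
exists (RComp e [:: emin; RProj 1; RProj 2]) => i n m.
apply: (@ev_comp _ _ _ [:: minn i (l - 2); n; m]); last by apply: He; lia.
constructor; first exact: (Hmin [:: i; n; m]).
constructor; first exact: (ev_proj 1 [:: i; n; m]).
by constructor; [exact: (ev_proj 2 [:: i; n; m]) | constructor].
Qed.

Lemma computableb_bitn N c p :
  computable N c -> computable N p -> computableb N (fun E => bitn (c E) (p E)).
Proof.
move=> Hc Hp; apply: computableb_odd.
by apply: computable_div Hc (computable_exp2 Hp) _ => E; rewrite expn_gt0.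
Qed.

Lemma computableb_bit_matches N c p b :
  computable N c -> computable N p -> computableb N b ->
  computableb N (fun E => bit_matches (c E) (p E) (b E)).
Proof.
move=> Hc Hp Hb; apply: computableb_and.
  exact: computableb_leq (computable_exp2 (computable_succ Hp)) Hc.
exact: computableb_eqb (computableb_bitn Hc Hp) Hb.
Qed.

Lemma computableb_check l psi e : 1 < l ->
  (forall i n m, i < l - 1 -> eval e [:: i; n; m] (psi i n m)) ->
  computableb 2 (fun E => check l psi (E 0) (E 1)).
Proof.
move=> Hl He; have [e' He'] := eval_psi_clamped Hl He.
have l_gt0 : env -> 0 < l by move=> _; exact: ltnW.
have Hi : computable 4 (fun E => E 2 %% l).
  exact: computable_mod (computable_proj _) (computable_const _ l) l_gt0.
have Hs : computable 4 (fun E => E 2 %/ l).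
  exact: computable_div (computable_proj _) (computable_const _ l) l_gt0.
have H2x : computable 4 (fun E => 2 * E 0).
  exact: computable_mul (computable_const _ 2) (computable_proj _).
have Hpoint : computableb 4 (fun E => point_ok l psi (E 3) (E 2 %% l) (E 2 %/ l) (E 1) (E 0)).
  apply: computableb_and; apply: computableb_implb.
  - exact: computableb_leq (computable_succ (computable_succ Hi)) (computable_const _ l).
  - apply: computableb_bit_matches (computable_proj _) _ _ => //.
      exact: computable_comp3 He' Hi (computable_proj _) (computable_proj _).
    by rewrite /up_bit; exact: computableb_bitn Hs H2x.
  - exact: computableb_leq (computable_const _ 1) Hi.
  - apply: computableb_bit_matches (computable_proj _) _ _ => //.
      exact: computable_comp3 He' (computable_pred Hi) (computable_proj _) (computable_proj _).
    by rewrite /down_bit; exact: computableb_bitn Hs (computable_succ H2x).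
have Hwitness : computableb 3 (fun E => witness_ok l psi (E 2) (E 1 %% l) (E 1 %/ l) (E 0)).
  have Hs3 : computable 3 (fun E => E 1 %/ l).
    exact: computable_div (computable_proj _) (computable_const _ l) l_gt0.
  exact: computableb_and (computableb_leq Hs3 (computable_proj _)) (computableb_all Hpoint Hs3).
exact: computableb_has Hwitness (computable_proj _).
Qed.

Theorem lemma2 (l : nat) (psi : nat -> nat -> nat -> nat) :
  2 <= l -> recursive_bijection l psi ->
  Pi02 (fun alpha => model_T l (LA (l:=l)) (S_alpha psi alpha)).
Proof.
move=> Hl [[epsi Hepsi] _]; have l_gt0 : 0 < l by exact: ltnW.
have [[e He] _] := computableb_neg (computableb_check Hl Hepsi).
have check_eval k c : check l psi k c <-> eval e [:: k; c] 0.
  split=> [Hc | /(eval_det (He [:: k; c]))]; first by have := He [:: k; c]; rewrite /= Hc.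
  by case: check.
exists e; split=> [k c | alpha]; first by eexists; exact: (He [:: k; c]).
split=> [/model_extension/(extension_check l_gt0) Hm k | Hm].
  by have [m /check_eval] := Hm k; exists m.
apply/extension_model/(check_extension l_gt0) => k.
by have [m /check_eval] := Hm k; exists m.
Qed.
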